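(* Let $D_\infty$ be the infinite dihedral group, given by the monoid presentation $\langle a,b\mid a^2=1,\ b^2=1\rangle$. Then: (1) $D_\infty$ belongs to the Mal'cev product $\mathbf{Com}\,ⓜ\,\mathbf{Fin}$. (2) For every $n\ge1$ the Zimin word $Z_n$ is an isoterm relative to $D_\infty$. Consequently, the semigroup identities of $D_\infty$ admit no finite basis.
   Context: The Zimin words are defined by $Z_1=x_1$ and $Z_{n+1}=Z_n\,x_{n+1}\,Z_n$. A word $v$ is an isoterm relative to a semigroup $S$ if the only word $v'$ such that $S$ satisfies $v\approx v'$ is $v'=v$. For classes of semigroups $\mathbf{A},\mathbf{B}$, the Mal'cev product $\mathbf{A}\,ⓜ\,\mathbf{B}$ is the class of all semigroups $S$ admitting a congruence $\theta$ such that $S/\theta\in\mathbf{B}$ and every $\theta$-class that is a subsemigroup of $S$ lies in $\mathbf{A}$. $\mathbf{Com}$ denotes the class of commutative semigroups and $\mathbf{Fin}$ the class of finite semigroups. The identities considered are semigroup identities, i.e. identities $u\approx v$ between nonempty words. *)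

From mathcomp Require Import all_boot.
Set Implicit Arguments. Unset Strict Implicit. Unset Printing Implicit Defensive.

(* Variables are natural numbers; a word is a sequence of variables.
   Identities are between NONEMPTY words. *)
Definition word := seq nat.

(* Zimin words: zimin 1 = x1, zimin (n+1) = zimin n x_(n+1) zimin n.
   (zimin 0 = empty word is never used.) *)
Fixpoint zimin (n : nat) : word :=
  match n with
  | 0 => [::]
  | m.+1 => zimin m ++ m.+1 :: zimin m
  end.

Definition eval_word (T : Type) (mul : T -> T -> T) (phi : nat -> T) (w : word)
  : option T :=
  match w with
  | [::] => None
  | x :: w' => Some (foldl (fun acc y => mul acc (phi y)) (phi x) w')
  end.

Definition satisfies (T : Type) (mul : T -> T -> T) (u v : word) : Prop :=
  forall phi : nat -> T, eval_word mul phi u = eval_word mul phi v.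

Definition isoterm (T : Type) (mul : T -> T -> T) (v : word) : Prop :=
  forall v' : word, v' != [::] -> satisfies mul v v' -> v' = v.

Definition in_Com_malcev_Fin (T : Type) (mul : T -> T -> T) : Prop :=
  exists theta : T -> T -> Prop,
    [/\
        (forall x, theta x x) /\
        (forall x y, theta x y -> theta y x),
        (forall x y z, theta x y -> theta y z -> theta x z),
        (forall x y z w, theta x y -> theta z w -> theta (mul x z) (mul y w)),
        (exists (n : nat) (r : 'I_n -> T), forall x, exists i, theta x (r i)) &
        (* every theta-class which is a subsemigroup is commutative *)
        (forall x,
           (forall y z, theta x y -> theta x z -> theta x (mul y z)) ->
           forall y z, theta x y -> theta x z -> mul y z = mul z y)].

Definition subst_word (sigma : nat -> word) (w : word) : word :=
  flatten (map sigma w).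

Inductive derives (Sigma : seq (word * word)) : word -> word -> Prop :=
  | der_ax u v : (u, v) \in Sigma -> derives Sigma u v
  | der_refl u : derives Sigma u u
  | der_sym u v : derives Sigma u v -> derives Sigma v u
  | der_trans u v w : derives Sigma u v -> derives Sigma v w -> derives Sigma u w
  | der_subst (sigma : nat -> word) u v :
      (forall x, sigma x != [::]) ->
      derives Sigma u v -> derives Sigma (subst_word sigma u) (subst_word sigma v)
  | der_mult p q u v :
      derives Sigma u v -> derives Sigma (p ++ u ++ q) (p ++ v ++ q).

Definition has_finite_basis (T : Type) (mul : T -> T -> T) : Prop :=
  exists Sigma : seq (word * word),
    (forall e, e \in Sigma -> [/\ e.1 != [::], e.2 != [::] & satisfies mul e.1 e.2]) /\
    (forall u v, u != [::] -> v != [::] -> satisfies mul u v -> derives Sigma u v).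

(* Elements are the normal forms of the presentation: words over {a,b}
   (a = false, b = true) with no two equal adjacent letters.  The product
   is concatenation followed by cancellation of aa and bb. *)
Definition reduced (s : seq bool) : bool := sorted (fun x y : bool => x != y) s.

Definition push (x : bool) (w : seq bool) : seq bool :=
  if w is y :: w' then (if x == y then w' else x :: w) else [:: x].

Definition reduce (s : seq bool) : seq bool := foldr push [::] s.

Lemma push_reduced x w : reduced w -> reduced (push x w).
Proof.
case: w => [|y w] //= Hw.
case: eqP => [_|/eqP nxy]; first exact: (path_sorted Hw).
by rewrite /= nxy Hw.
Qed.

Lemma reduce_reduced s : reduced (reduce s).
Proof. by elim: s => [|x s IH] //=; apply: push_reduced. Qed.

Definition Dinf : Type := {s : seq bool | reduced s}.

Definition Dinf_mul (u v : Dinf) : Dinf :=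
  exist _ (reduce (sval u ++ sval v)) (reduce_reduced _).

(* D is isomorphic to the group Z x| Z/2 of isometries x |-> +-x + k
   of the integers (a |-> x |-> -x, b |-> x |-> 1 - x); reduced words are the
   normal forms, so identities of D are identities of this group, which we may
   evaluate as monoid words (the empty word being 1).
   (1) The congruence "same parity" has two classes; the only class that is a
       subsemigroup is the abelian subgroup of translations.
   (2) Call a word rigid when it is the only word equal to it in the group.
       Because the group has trivial centre, A x B is rigid when A, B are rigid
       and x occurs in neither; evaluating x at a reflection and the other
       letters at a translation shows that x A x is rigid when A is.  Zimin
       words are built by the first rule.
   (3) Let C_n = 1 2 .. n n .. 1 and U_n = C_n 0 0.  The group satisfies
       U_n = 0 0 C_n (both factors are translations), while in the finite
       semigroup S_n of factors of U_n (with zero) this identity fails for n >= 1.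
       On the other hand every identity of D with at most n+1 variables holds
       in S_{n+1}: proper factors of U_{n+1} are rigid; a substitution image
       of a word with a linear letter splits U_{n+1} into rigid pieces; and a
       word without linear letters can only cover U_{n+1} by one-letter images,
       since no pair of letters repeats in U_{n+1}, hence needs n+2 variables.
       A finite basis would bound the number of variables of its identities
       and, by soundness of equational logic, transfer to some S_{n+1}. *)

From mathcomp Require Import all_boot all_order all_algebra.
From mathcomp Require Import zify.
Set Implicit Arguments. Unset Strict Implicit. Unset Printing Implicit Defensive.
Import GRing.Theory.

Lemma subst_cat sigma u v :
  subst_word sigma (u ++ v) = subst_word sigma u ++ subst_word sigma v.
Proof. by rewrite /subst_word map_cat flatten_cat. Qed.

Lemma subst_cons sigma x w : subst_word sigma (x :: w) = sigma x ++ subst_word sigma w.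
Proof. by []. Qed.

Lemma split_first (x : nat) v :
  x \in v -> exists A R, v = A ++ x :: R /\ x \notin A.
Proof.
elim: v => [|y v IH] //; rewrite inE; case: eqP => [->|nxy] /= xv; first by exists [::], v.
have [A [R [-> nA]]] := IH xv; exists (y :: A), R; split=> //.
by rewrite inE negb_or nA andbT; apply/eqP.
Qed.

Lemma split_single (x : nat) v : count_mem x v = 1 ->
  exists A B, [/\ v = A ++ x :: B, x \notin A & x \notin B].
Proof.
move=> C; have /split_first [A [B [Ev nA]]] : x \in v by rewrite -has_pred1 has_count C.
exists A, B; split=> //; apply/count_memPn.
by move: C; rewrite Ev count_cat (count_memPn nA) /= eqxx; case.
Qed.

Lemma split_double (x : nat) v : count_mem x v = 2 ->
  exists A B C, [/\ v = A ++ x :: B ++ x :: C, x \notin A, x \notin B & x \notin C].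
Proof.
move=> C; have /split_first [A [R [Ev nA]]] : x \in v by rewrite -has_pred1 has_count C.
have [B [D [ER nB nD]]] : exists B D, [/\ R = B ++ x :: D, x \notin B & x \notin D].
  by apply: split_single; move: C; rewrite Ev count_cat (count_memPn nA) /= eqxx; case.
by exists A, B, D; rewrite Ev ER.
Qed.

Lemma split_twice (x : nat) s : 1 < count_mem x s ->
  exists s1 s2 s3, s = s1 ++ x :: s2 ++ x :: s3.
Proof.
move=> C; have /split_first [s1 [r [Es nx]]] : x \in s by rewrite -has_pred1 has_count ltnW.
have /split_first [s2 [s3 [Er _]]] : x \in r.
  by move: C; rewrite Es count_cat (count_memPn nx) /= eqxx -has_pred1 has_count.
by exists s1, s2, s3; rewrite Es Er.
Qed.

(* The pair (k, e) is the isometry x |-> (-1)^e x + k of Z; composition is imul. *)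
Definition isom : Type := (int * bool)%type.

Section IsometryGroup.
Local Open Scope ring_scope.

Definition flip (e : bool) (k : int) : int := if e then - k else k.
Definition imul (p q : isom) : isom := (p.1 + flip p.2 q.1, p.2 (+) q.2).
Definition ione : isom := (0, false).
Definition iinv (p : isom) : isom := (- flip p.2 p.1, p.2).
Definition shift (k : int) : isom := (k, false).
Definition reflection (k : int) : isom := (k, true).

Lemma imulA p q r : imul p (imul q r) = imul (imul p q) r.
Proof.
by case: p q r => [a [|]] [b [|]] [c [|]]; rewrite /imul /flip /=; congr pair; lia.
Qed.

Lemma imul1i p : imul ione p = p.
Proof. by case: p => a e; rewrite /imul /= add0r. Qed.

Lemma imuli1 p : imul p ione = p.
Proof. by case: p => a [|]; rewrite /imul /flip /= ?oppr0 addr0 ?addbF. Qed.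

Lemma imulVi p : imul (iinv p) p = ione.
Proof. by case: p => a [|]; rewrite /imul /flip /ione /=; congr pair; lia. Qed.

Lemma imuliV p : imul p (iinv p) = ione.
Proof. by case: p => a [|]; rewrite /imul /flip /ione /=; congr pair; lia. Qed.

Lemma imulKi g p : imul (iinv g) (imul g p) = p.
Proof. by rewrite imulA imulVi imul1i. Qed.

Lemma imuliK g p : imul (imul p g) (iinv g) = p.
Proof. by rewrite -imulA imuliV imuli1. Qed.

Lemma imul_cancell g p q : imul g p = imul g q -> p = q.
Proof. by move=> E; rewrite -(imulKi g p) E imulKi. Qed.

Lemma imul_cancelr g p q : imul p g = imul q g -> p = q.
Proof. by move=> E; rewrite -(imuliK g p) E imuliK. Qed.

(* The group has trivial centre: test against a reflection and a translation. *)
Lemma central_trivial c : (forall g, imul c g = imul g c) -> c = ione.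
Proof.
case: c => k e C.
have := C (reflection 0); have := C (shift 1); rewrite /imul /flip /ione /=.
by case: e {C} => /= -[E1] [E2]; congr pair; lia.
Qed.

(* If a g b = a' g b' for every g, then a = a' and b = b': the element
   a'^-1 a commutes with everything, hence is trivial by central_trivial. *)
Lemma sandwich_cancel a b a' b' :
  (forall g, imul a (imul g b) = imul a' (imul g b')) -> a = a' /\ b = b'.
Proof.
move=> E; have Eab : imul a b = imul a' b' by have := E ione; rewrite !imul1i.
set c := imul (iinv a') a.
have c_central : forall g, imul c g = imul g c.
  move=> g; apply: (@imul_cancelr b).
  by rewrite /c -!imulA E Eab !imulKi.
have Ea : a = a'.
  have := central_trivial c_central; rewrite /c => /(congr1 (imul a')).
  by rewrite imulA imuliV imul1i imuli1.
by split=> //; apply: (@imul_cancell a); rewrite Eab Ea.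
Qed.

Lemma imul_translationsC p q : p.2 = false -> q.2 = false -> imul p q = imul q p.
Proof. by case: p q => [a e] [b f] /= -> ->; rewrite /imul /=; congr pair; lia. Qed.

End IsometryGroup.

Section NormalForms.
Local Open Scope ring_scope.

Definition letter (c : bool) : isom := reflection (c : int).

Definition eval_nf (l : seq bool) : isom :=
  foldr (fun c p => imul (letter c) p) ione l.

Lemma eval_nf_cat l1 l2 : eval_nf (l1 ++ l2) = imul (eval_nf l1) (eval_nf l2).
Proof. by elim: l1 => [|c l IH] /=; rewrite ?imul1i // IH imulA. Qed.

Lemma letterK c : imul (letter c) (letter c) = ione.
Proof. by case: c; rewrite /imul /flip /ione /=; congr pair; lia. Qed.

Lemma eval_nf_reduce l : eval_nf (reduce l) = eval_nf l.
Proof.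
elim: l => [|c l IH] //=; rewrite -IH; case: (reduce l) => [|d w] //=.
by case: eqP => [<-|_] //=; rewrite imulA letterK imul1i.
Qed.

Fixpoint alt (c : bool) (m : nat) : seq bool :=
  if m is m'.+1 then c :: alt (~~ c) m' else [::].

Lemma alt_reduced c m : reduced (alt c m).
Proof.
elim: m c => [|[|m] IH] c //=.
by have := IH (~~ c); rewrite /reduced /= => ->; rewrite andbT; case: c.
Qed.

Lemma reduced_alt l : reduced l -> l = alt (head false l) (size l).
Proof.
elim: l => [|c [|d l] IH] //= /andP [ncd Hl].
by rewrite {1}IH //=; case: c d ncd {IH Hl} => [] [].
Qed.

Lemma eval_nf_alt_even c j :
  eval_nf (alt c j.*2) = shift (if c then j%:Z else - j%:Z).
Proof.
elim: j c => [|j IH] c; first by case: c; rewrite /= ?oppr0.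
rewrite doubleS /= negbK IH /imul /flip /shift /=.
by case: c => /=; congr pair; lia.
Qed.

Lemma eval_nf_alt_odd c j :
  eval_nf (alt c j.*2.+1) = reflection (if c then 1 + j%:Z else - j%:Z).
Proof.
rewrite [alt _ _]/= [eval_nf _]/= eval_nf_alt_even /imul /flip /shift /=.
by case: c => /=; congr pair; lia.
Qed.

Definition nf_of (p : isom) : seq bool :=
  let: (k, e) := p in
  if e then (if k <= 0 then alt false (absz k).*2.+1 else alt true (absz k).-1.*2.+1)
  else (if k < 0 then alt false (absz k).*2 else alt true (absz k).*2).

Lemma nf_of_reduced p : reduced (nf_of p).
Proof. by case: p => k [|]; rewrite /nf_of; case: ifP => _; apply: alt_reduced. Qed.

Lemma eval_nf_of p : eval_nf (nf_of p) = p.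
Proof.
case: p => k [|] /=; case: ifPn => Hk;
  rewrite ?eval_nf_alt_odd ?eval_nf_alt_even /shift /reflection; congr pair; lia.
Qed.

Lemma nf_of_eval l : reduced l -> nf_of (eval_nf l) = l.
Proof.
move=> /reduced_alt ->; move: (head false l) (size l) => c m.
rewrite -(odd_double_half m).
case: (odd m); [rewrite add1n eval_nf_alt_odd | rewrite add0n eval_nf_alt_even];
  case: c; rewrite /nf_of /reflection /shift;
  first [case Hk: (_ <= _) | case Hk: (_ < _)]; try lia;
  first [by congr alt; lia | by have -> : m./2 = 0 by lia].
Qed.

End NormalForms.

Definition to_isom (x : Dinf) : isom := eval_nf (sval x).

Definition of_isom (p : isom) : Dinf := exist _ (nf_of p) (nf_of_reduced p).

Lemma to_isom_mul x y : to_isom (Dinf_mul x y) = imul (to_isom x) (to_isom y).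
Proof. by rewrite /to_isom /= eval_nf_reduce eval_nf_cat. Qed.

Lemma to_isom_inj : injective to_isom.
Proof.
case=> l Hl [l' Hl']; rewrite /to_isom /= => E.
have El : l = l' by rewrite -(nf_of_eval Hl) -(nf_of_eval Hl') E.
by subst l'; congr exist; apply: bool_irrelevance.
Qed.

Lemma of_isomK : cancel of_isom to_isom.
Proof. exact: eval_nf_of. Qed.

Definition ival (psi : nat -> isom) (w : word) : isom :=
  foldr (fun z p => imul (psi z) p) ione w.

Definition isom_eq (u v : word) : Prop := forall psi, ival psi u = ival psi v.

Lemma ival_cons psi z w : ival psi (z :: w) = imul (psi z) (ival psi w).
Proof. by []. Qed.

Lemma ival_cat psi u v : ival psi (u ++ v) = imul (ival psi u) (ival psi v).
Proof. by elim: u => [|z u IH] /=; rewrite ?imul1i // IH imulA. Qed.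

Lemma eq_in_ival psi psi' w : {in w, psi =1 psi'} -> ival psi w = ival psi' w.
Proof.
elim: w => [|z w IH] //= E; rewrite E ?mem_head // IH // => y Hy.
by rewrite E // inE Hy orbT.
Qed.

Lemma ival_subst psi sigma w :
  ival psi (subst_word sigma w) = ival (fun z => ival psi (sigma z)) w.
Proof. by elim: w => [|z w IH] //; rewrite /subst_word /= ival_cat -IH. Qed.

Lemma ival_shift (a : pred nat) w :
  ival (fun z => shift (a z)%:Z) w = shift (count a w)%:Z.
Proof.
elim: w => [|z w IH] //=; rewrite IH /imul /flip /shift /=.
by congr pair; lia.
Qed.

Lemma to_isom_eval (phi : nat -> Dinf) x w :
  eval_word Dinf_mul phi (x :: w) = Some (of_isom (ival (to_isom \o phi) (x :: w))).
Proof.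
congr Some; apply: to_isom_inj; rewrite of_isomK /=.
elim/last_ind: w => [|w y IH] /=; first by rewrite imuli1.
by rewrite -cats1 foldl_cat /= to_isom_mul IH ival_cat /= imuli1 imulA.
Qed.

Lemma satisfies_isom_eq u v :
  u != [::] -> v != [::] -> satisfies Dinf_mul u v <-> isom_eq u v.
Proof.
case: u => [|x u] //; case: v => [|y v] // _ _; split => E psi.
- have := E (of_isom \o psi); rewrite !to_isom_eval => /Some_inj /(f_equal to_isom).
  by rewrite !of_isomK !(@eq_in_ival _ psi) // => z _ /=; rewrite of_isomK.
- by rewrite !to_isom_eval E.
Qed.

(* Group identities preserve the content (evaluate at translations by 0 or 1) ... *)
Lemma isom_eq_count u v : isom_eq u v -> forall x, count_mem x u = count_mem x v.
Proof.
move=> E x; have := E (fun z => shift (z == x)%:Z); rewrite !ival_shift.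
by case.
Qed.

(* ... and the length (evaluate every letter at the translation by 1). *)
Lemma isom_eq_size u v : isom_eq u v -> size u = size v.
Proof.
move=> E; have := E (fun z => shift (predT z)%:Z); rewrite !ival_shift !count_predT.
by case.
Qed.

Lemma isom_eq_mem u v : isom_eq u v -> u =i v.
Proof. by move=> E x; rewrite -!has_pred1 !has_count (isom_eq_count E). Qed.

Lemma isom_eq_sym u v : isom_eq u v -> isom_eq v u.
Proof. by move=> E psi; rewrite E. Qed.

Lemma isom_eq_context p q u v : isom_eq u v -> isom_eq (p ++ u ++ q) (p ++ v ++ q).
Proof. by move=> E psi; rewrite !ival_cat E. Qed.

Lemma isom_eq_subst sigma u v :
  isom_eq u v -> isom_eq (subst_word sigma u) (subst_word sigma v).
Proof. by move=> E psi; rewrite !ival_subst E. Qed.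

Definition upd (psi : nat -> isom) (x : nat) (g : isom) : nat -> isom :=
  fun z => if z == x then g else psi z.

Lemma ival_upd_notin psi x g w : x \notin w -> ival (upd psi x g) w = ival psi w.
Proof.
move=> nx; apply: eq_in_ival => z zw; rewrite /upd; case: eqP => // Ez.
by rewrite -Ez zw in nx.
Qed.

(* If x occurs once in A x B, any word equal to A x B is A' x B' with A = A' and
   B = B' in the group: vary the value of x and apply sandwich_cancel. *)
Lemma isom_eq_split A x B v : x \notin A -> x \notin B -> isom_eq (A ++ x :: B) v ->
  exists A' B', [/\ v = A' ++ x :: B', isom_eq A A' & isom_eq B B'].
Proof.
move=> nA nB E.
have [A' [B' [Ev nA' nB']]] : exists A' B', [/\ v = A' ++ x :: B', x \notin A' & x \notin B'].
  apply: split_single.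
  by rewrite -(isom_eq_count E) count_cat (count_memPn nA) /= eqxx (count_memPn nB).
suff E' : forall psi, ival psi A = ival psi A' /\ ival psi B = ival psi B'.
  by exists A', B'; split=> // psi; case: (E' psi).
move=> psi; apply: sandwich_cancel => g; have := E (upd psi x g).
by rewrite Ev !ival_cat /= !ival_upd_notin // /upd eqxx.
Qed.

Lemma ival_free_shift (psi : nat -> isom) x w :
  (forall z, z != x -> psi z = shift 1) -> x \notin w -> ival psi w = shift (size w)%:Z.
Proof.
move=> Hpsi; elim: w => [|z w IH] //; rewrite inE negb_or => /andP [nz nw] /=.
by rewrite IH // Hpsi 1?eq_sym // /imul /shift /=; congr pair; lia.
Qed.

(* If x avoids A, any word equal to x A x is x C x with A = C in the group:
   with x a reflection and all other letters the translation by 1, the value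
   of B x C x D is the translation by |B| - |C| + |D|, which must be -|A|. *)
Lemma isom_eq_wrap x A v : x \notin A -> isom_eq (x :: A ++ [:: x]) v ->
  exists C, v = x :: C ++ [:: x] /\ isom_eq A C.
Proof.
move=> nA E.
have Cv : count_mem x v = 2.
  by rewrite -(isom_eq_count E) /= count_cat (count_memPn nA) /= eqxx.
have [B [C [D [Ev nB nC nD]]]] := split_double Cv; subst v.
set psi := upd (fun=> shift 1) x (reflection 0).
have psi_free : forall z, z != x -> psi z = shift 1 by move=> z /negbTE; rewrite /psi /upd => ->.
have := E psi; have := isom_eq_size E.
rewrite !(ival_cat, ival_cons) /= !(ival_free_shift psi_free) // imuli1.
rewrite !size_cat /= /psi /upd eqxx /imul /flip /reflection /shift /= => Sz [Eval].
rewrite size_cat /= in Sz.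
have [/nilP B0 /nilP D0] : nilp B /\ nilp D by rewrite /nilp; split; apply/eqP; lia.
subst B D.
exists C; split=> // phi; have := E phi.
by rewrite cat0s !(ival_cat, ival_cons) => /imul_cancell /imul_cancelr.
Qed.

Definition rigid (w : word) : Prop := forall v, isom_eq w v -> v = w.

Lemma rigid_nil : rigid [::].
Proof. by move=> v /isom_eq_size /esym /size0nil. Qed.

Lemma rigid_split A x B : rigid A -> rigid B -> x \notin A -> x \notin B ->
  rigid (A ++ x :: B).
Proof.
move=> rA rB nA nB v /(isom_eq_split nA nB) [A' [B' [-> EA EB]]].
by rewrite (rA _ EA) (rB _ EB).
Qed.

Lemma rigid_wrap x A : rigid A -> x \notin A -> rigid (x :: A ++ [:: x]).
Proof. by move=> rA nA v /(isom_eq_wrap nA) [C [-> EC]]; rewrite (rA _ EC). Qed.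

Lemma rigid_infix w u : rigid u -> infix w u -> rigid w.
Proof.
move=> ru /infixP [p [q Eu]] v E; subst u.
have /eqP := ru _ (isom_eq_context p q E).
by rewrite eqseq_cat // eqseq_cat ?(isom_eq_size E) // => /and3P [_ /eqP].
Qed.

Lemma rigid_isoterm w : rigid w -> w != [::] -> isoterm Dinf_mul w.
Proof. by move=> rw nw v nv /(satisfies_isom_eq nw nv) /rw. Qed.

(* The Zimin word Z_n uses exactly the letters 1 .. n, so Z_(n+1) = Z_n (n+1) Z_n
   is rigid by rigid_split. *)
Lemma zimin_mem n x : x \in zimin n -> 0 < x <= n.
Proof.
elim: n => [|n IH] //=; rewrite mem_cat inE => /or3P [/IH|/eqP ->|/IH];
  rewrite ?leqnn //; by case/andP => -> /leqW.
Qed.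

Lemma rigid_zimin n : rigid (zimin n).
Proof.
elim: n => [|n IH] /=; first exact: rigid_nil.
have nz : n.+1 \notin zimin n by apply/negP => /zimin_mem; rewrite ltnn andbF.
exact: rigid_split.
Qed.

Lemma zimin_isoterm n : 1 <= n -> isoterm Dinf_mul (zimin n).
Proof.
move=> Hn; apply: rigid_isoterm (@rigid_zimin n) _.
by case: n Hn => // n _ /=; case: (zimin n).
Qed.

(* Part (1): the parity congruence has two classes; a class that is a
   subsemigroup contains a square, hence consists of commuting translations. *)
Lemma Dinf_in_Com_malcev_Fin : in_Com_malcev_Fin Dinf_mul.
Proof.
exists (fun x y => (to_isom x).2 = (to_isom y).2); split.
- by split=> // x y ->.
- by move=> x y z -> ->.
- by move=> x y z w Exy Ezw; rewrite !to_isom_mul /= Exy Ezw.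
- exists 2, (fun i : 'I_2 => of_isom (0%R, i != ord0)) => x.
  by exists (if (to_isom x).2 then ord_max else ord0); rewrite of_isomK; case: (to_isom x).2.
- move=> x closed y z Ey Ez; apply: to_isom_inj; rewrite !to_isom_mul.
  have Ex : (to_isom x).2 = false.
    by have := closed x x erefl erefl; rewrite to_isom_mul /=; case: (to_isom x).2.
  by apply: imul_translationsC; rewrite -?Ey -?Ez.
Qed.

Definition pal (l : seq nat) : word := l ++ rev l.

Definition Cw (n : nat) : word := pal (iota 1 n).

Definition Uw (n : nat) : word := Cw n ++ [:: 0; 0].

Lemma pal_cons x l : pal (x :: l) = x :: pal l ++ [:: x].
Proof. by rewrite /pal rev_cons -cats1 catA. Qed.

Lemma notin_pal x l : x \notin l -> x \notin pal l.
Proof. by rewrite /pal mem_cat mem_rev orbb. Qed.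

Lemma rigid_pal l : uniq l -> rigid (pal l).
Proof.
elim: l => [|x l IH] /=; first by move=> _; apply: rigid_nil.
by case/andP=> nx ul; rewrite pal_cons; apply: rigid_wrap (IH ul) (notin_pal nx).
Qed.

Lemma rigid_Uw_prefix n : rigid (Cw n ++ [:: 0]).
Proof.
apply: rigid_split rigid_nil _ _ => //; first exact/rigid_pal/iota_uniq.
by apply: notin_pal; rewrite mem_iota.
Qed.

Lemma rigid_Uw_suffix n : rigid (pal (iota 2 n) ++ [:: 1; 0; 0]).
Proof.
apply: rigid_split (@rigid_wrap 0 _ rigid_nil _) _ _ => //.
  exact/rigid_pal/iota_uniq.
by apply: notin_pal; rewrite mem_iota.
Qed.

Lemma infix_proper (w u u1 u2 : word) c b :
  infix w u -> w != u -> u = c :: u1 -> u = rcons u2 b -> infix w u1 || infix w u2.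
Proof.
move=> /infixP [[|d p] [q Eu]] nwu E1 E2; last first.
  by rewrite E1 /= in Eu; case: Eu => _ ->; rewrite infix_infix.
case/lastP: q Eu => [|q b'] Eu; first by rewrite Eu cats0 eqxx in nwu.
by rewrite /= -rcons_cat E2 in Eu; case: (rcons_inj Eu) => -> _; rewrite prefix_infix orbT.
Qed.

Lemma rigid_proper_factor n w : infix w (Uw n.+1) -> w != Uw n.+1 -> rigid w.
Proof.
move=> fw nw.
have Esuf : Uw n.+1 = 1 :: (pal (iota 2 n) ++ [:: 1; 0; 0]).
  by rewrite /Uw /Cw [iota 1 _]/= pal_cons /= -catA.
have Epre : Uw n.+1 = rcons (Cw n.+1 ++ [:: 0]) 0 by rewrite /Uw -cats1 -catA.
case/orP: (infix_proper fw nw Esuf Epre) => Hw.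
- exact: rigid_infix (@rigid_Uw_suffix n) Hw.
- exact: rigid_infix (@rigid_Uw_prefix n.+1) Hw.
Qed.

Definition Uletter (n i : nat) : nat :=
  if i < n then i.+1 else if i < n + n then n + n - i else 0.

Lemma nth_Uw n i : nth 0 (Uw n) i = Uletter n i.
Proof.
rewrite /Uw /Cw /pal -catA nth_cat size_iota /Uletter.
case: ltnP => H1; first by rewrite nth_iota // add1n.
rewrite nth_cat size_rev size_iota; case: ltnP => H2.
  by rewrite nth_rev ?size_iota // nth_iota; [rewrite ifT; lia | lia].
rewrite ifF; last lia.
by case: (i - n - n) => [|[|k]] //=; rewrite nth_nil.
Qed.

Lemma size_Uw n : size (Uw n) = (n + n).+2.
Proof. by rewrite /Uw /Cw /pal !size_cat size_rev size_iota addn2. Qed.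

Lemma Uletter_no_repeat n i j : i.+2 <= j -> j.+1 < (n + n).+2 ->
  Uletter n i = Uletter n j -> Uletter n i.+1 = Uletter n j.+1 -> False.
Proof.
rewrite /Uletter => H1 H2.
case: (ltnP i n) => a1; case: (ltnP i.+1 n) => a2;
case: (ltnP j n) => a3; case: (ltnP j.+1 n) => a4;
case: (ltnP i (n + n)) => a5; case: (ltnP i.+1 (n + n)) => a6;
case: (ltnP j (n + n)) => a7; case: (ltnP j.+1 (n + n)) => a8; lia.
Qed.

Lemma nth_cat_size (a b : word) k : nth 0 (a ++ b) (size a + k) = nth 0 b k.
Proof. by rewrite nth_cat ltnNge leq_addr /= addKn. Qed.

Lemma Uw_no_repeated_pair n s1 s2 s3 c d :
  s1 ++ [:: c; d] ++ s2 ++ [:: c; d] ++ s3 <> Uw n.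
Proof.
move=> E; set i := size s1; set j := size (s1 ++ [:: c; d] ++ s2).
have Ei k : Uletter n (i + k) = nth 0 ([:: c; d] ++ s2 ++ [:: c; d] ++ s3) k.
  by rewrite -nth_Uw -E nth_cat_size.
have Ej k : Uletter n (j + k) = nth 0 ([:: c; d] ++ s3) k.
  by rewrite -nth_Uw -E (catA s1) (catA (s1 ++ _)) -(catA s1) nth_cat_size.
have := congr1 size E; rewrite size_Uw !size_cat /= => Sz.
apply: (@Uletter_no_repeat n i j); try by rewrite /j /i !size_cat /=; lia.
- by have := Ei 0; have := Ej 0; rewrite !addn0 /= => -> ->.
- by have := Ei 1; have := Ej 1; rewrite !addn1 /= => -> ->.
Qed.

Section Soundness.
Variables (T : Type) (mul : T -> T -> T).
Hypothesis mulA : forall x y z, mul x (mul y z) = mul (mul x y) z.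

Definition omul (a b : option T) : option T :=
  match a, b with
  | Some x, Some y => Some (mul x y)
  | Some x, None => Some x
  | None, b => b
  end.

Lemma eval_cat phi u v :
  eval_word mul phi (u ++ v) = omul (eval_word mul phi u) (eval_word mul phi v).
Proof.
case: u => [|x u] /=; first by case: (eval_word mul phi v).
rewrite foldl_cat; case: v => [|y v] //=.
elim: v (phi y) => [|z v IH] a //=.
by rewrite -mulA IH.
Qed.

Lemma eval_subst phi sigma w : (forall x, sigma x != [::]) ->
  eval_word mul phi (subst_word sigma w) =
  eval_word mul (fun x => odflt (phi 0) (eval_word mul phi (sigma x))) w.
Proof.
move=> ne; elim: w => [|x w IH] //.
rewrite -cat1s /subst_word map_cat flatten_cat eval_cat -/(subst_word sigma w) IH.
by rewrite [in RHS]eval_cat /= cats0; case: (sigma x) (ne x).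
Qed.

Lemma derives_sound (Sigma : seq (word * word)) u v :
  (forall e, e \in Sigma -> satisfies mul e.1 e.2) ->
  derives Sigma u v -> satisfies mul u v.
Proof.
move=> HS; elim=> {u v} [u v /HS //|u //|u v _ IH phi|u v w _ IH1 _ IH2 phi|
                          sigma u v ne _ IH phi|p q u v _ IH phi].
- by rewrite IH.
- by rewrite IH1 IH2.
- by rewrite !eval_subst // IH.
- by rewrite !eval_cat IH.
Qed.

End Soundness.

(* The semigroup S_n: nonempty factors of U_n with a zero None; a product is
   the concatenation when that is again a factor, and None otherwise.  The
   values Some [::] and Some w with w not a factor are absorbed like None. *)
Section FactorSemigroup.
Variable n : nat.
Local Notation U := (Uw n).

Definition fac (u : word) : option word := if infix u U then Some u else None.

Definition mulS (a b : option word) : option word :=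
  match a, b with
  | Some x, Some y => if (x != [::]) && (y != [::]) then fac (x ++ y) else None
  | _, _ => None
  end.

Lemma mulS_proper x y : x != [::] -> y != [::] -> mulS (Some x) (Some y) = fac (x ++ y).
Proof. by move=> nx ny; rewrite /= nx ny. Qed.

Lemma mulS_facr x v : x != [::] -> v != [::] -> mulS (Some x) (fac v) = fac (x ++ v).
Proof.
move=> nx nv; rewrite /fac; case: ifPn => [_|fv] /=; first by rewrite nx nv.
by rewrite ifF //; apply: contraNF fv; apply: catl_infix.
Qed.

Lemma mulS_facl u z : u != [::] -> z != [::] -> mulS (fac u) (Some z) = fac (u ++ z).
Proof.
move=> nu nz; rewrite /fac; case: ifPn => [_|fu] /=; first by rewrite nu nz.
by rewrite ifF //; apply: contraNF fu; apply: catr_infix.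
Qed.

Definition proper (a : option word) : bool := if a is Some x then x != [::] else false.

Lemma mulS_improperl a b : ~~ proper a -> mulS a b = None.
Proof. by case: a b => [[|x l]|] [y|]. Qed.

Lemma mulS_improperr a b : ~~ proper b -> mulS a b = None.
Proof. by case: a b => [x|] [[|y l]|] //= _; rewrite andbF. Qed.

Lemma mulSA a b c : mulS a (mulS b c) = mulS (mulS a b) c.
Proof.
have [pa|na] := boolP (proper a); last by rewrite !(mulS_improperl _ na).
have [pb|nb] := boolP (proper b).
  have [pc|nc] := boolP (proper c); last by rewrite !(mulS_improperr _ nc) mulS_improperr.
  case: a b c pa pb pc => [x|] // [y|] // [z|] // nx ny nz.
  rewrite /proper in nx ny nz.
  by rewrite !mulS_proper // mulS_facr ?mulS_facl ?catA //; [case: x nx | case: y ny].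
by rewrite (mulS_improperl _ nb) (mulS_improperr _ nb) mulS_improperr.
Qed.

Section Evaluation.
Variable phi : nat -> option word.

Local Notation step := (fun a y => mulS a (phi y)).

Definition good (z : nat) : bool := proper (phi z).

Definition word_of (z : nat) : word := if phi z is Some (c :: l) then c :: l else [:: 0].

Lemma word_of_nonempty z : word_of z != [::].
Proof. by rewrite /word_of; case: (phi z) => [[|]|]. Qed.

Lemma good_word_of z : good z -> phi z = Some (word_of z).
Proof. by rewrite /good /word_of; case: (phi z) => [[|]|]. Qed.

Lemma foldl_fac q w : q != [::] -> all good w ->
  foldl step (fac q) w = fac (q ++ subst_word word_of w).
Proof.
elim: w q => [|z w IH] q nq /=; first by rewrite /subst_word cats0.
case/andP=> gz gw; rewrite good_word_of // mulS_facl ?word_of_nonempty // IH ?catA //.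
by case: q nq.
Qed.

Lemma foldl_None w : foldl step None w = None.
Proof. by elim: w. Qed.

Lemma foldl_improper a w : ~~ all good w -> foldl step a w = None.
Proof.
elim: w a => [|z w IH] a //=; rewrite negb_and => /orP [bz|/IH //].
by rewrite mulS_improperr // foldl_None.
Qed.

Lemma eval_mulS w : 1 < size w ->
  eval_word mulS phi w = Some (if all good w then fac (subst_word word_of w) else None).
Proof.
case: w => [|x [|y w]] // _; case: ifPn => [|bad] /=.
  case/and3P=> gx gy gw; rewrite (good_word_of gx) (good_word_of gy).
  rewrite mulS_proper ?word_of_nonempty // (foldl_fac _ gw) -?catA //.
  by case: (word_of x) (word_of_nonempty x).
congr Some; move: bad; rewrite !negb_and => /or3P [bx|by_|bw].
- by rewrite mulS_improperl // foldl_None.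
- by rewrite mulS_improperr // foldl_None.
- exact: foldl_improper.
Qed.

End Evaluation.
End FactorSemigroup.

Lemma rigid_strict_factor n p w q :
  p ++ w ++ q = Uw n.+1 -> (p != [::]) || (q != [::]) -> rigid w.
Proof.
move=> E npq; apply: (@rigid_proper_factor n); first by rewrite -E infix_infix.
apply/negP => /eqP Ew; move: npq (congr1 size E); rewrite Ew !size_cat.
by case: p {E} => [|c p]; case: q => [|d q] //=; lia.
Qed.

(* If U_n is a substitution image of a word without linear letters, every
   letter is replaced by a single letter, lest a pair of letters repeat. *)
Lemma nonlinear_cover_letters n s sigma :
  (forall z, sigma z != [::]) -> subst_word sigma s = Uw n ->
  (forall z, z \in s -> count_mem z s != 1) -> forall z, z \in s -> size (sigma z) = 1.
Proof.
move=> ne Es nonlin z zs.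
have [s1 [s2 [s3 Es']]] : exists s1 s2 s3, s = s1 ++ z :: s2 ++ z :: s3.
  apply: split_twice; move: (nonlin z zs); rewrite ltn_neqAle eq_sym => ->.
  by rewrite -has_pred1 has_count in zs.
move: Es; rewrite Es' !(subst_cat, subst_cons).
case: (sigma z) (ne z) => [|c [|d w]] // _ Eu; exfalso.
apply: (@Uw_no_repeated_pair n _ (w ++ subst_word sigma s2) (w ++ subst_word sigma s3) c d).
by rewrite -Eu /= -catA.
Qed.

Lemma subst_letters s sigma : (forall z, z \in s -> size (sigma z) = 1) ->
  subst_word sigma s = map (fun z => head 0 (sigma z)) s.
Proof.
elim: s => [|x s IH] // H1; rewrite subst_cons /= IH => [|z zs]; last by rewrite H1 // inE zs orbT.
by have := H1 x (mem_head _ _); case: (sigma x) => [|a [|]].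
Qed.

Lemma size_undup_map (f : nat -> nat) s : size (undup (map f s)) <= size (undup s).
Proof.
rewrite -(size_map f (undup s)); apply: uniq_leq_size; first exact: undup_uniq.
by move=> y; rewrite mem_undup => /mapP [z zs ->]; rewrite map_f // mem_undup.
Qed.

Lemma Uw_distinct_letters n : n < size (undup (Uw n)).
Proof.
rewrite -[n.+1](size_iota 0); apply: uniq_leq_size; first exact: iota_uniq.
move=> x; rewrite mem_iota mem_undup /Uw /Cw /pal !mem_cat mem_iota => /andP [_].
by case: x => [|x] Hx; rewrite ?inE ?orbT //; apply/orP; left; apply/orP; left; lia.
Qed.

Lemma nonlinear_cover_bound n s sigma :
  (forall z, sigma z != [::]) -> subst_word sigma s = Uw n ->
  (forall z, z \in s -> count_mem z s != 1) -> n < size (undup s).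
Proof.
move=> ne Es nonlin; apply: leq_trans (Uw_distinct_letters n) _.
by rewrite -Es subst_letters ?size_undup_map //; apply: nonlinear_cover_letters Es nonlin.
Qed.

Lemma factor_identity n s t sigma :
  isom_eq s t -> size (undup s) <= n.+1 -> (forall z, sigma z != [::]) ->
  infix (subst_word sigma s) (Uw n.+1) -> subst_word sigma t = subst_word sigma s.
Proof.
move=> E Hs ne I; have Esub := isom_eq_subst sigma E.
have [Eq|Neq] := eqVneq (subst_word sigma s) (Uw n.+1); last first.
  exact: rigid_proper_factor I Neq _ Esub.
have [/hasP [x xs /eqP Cx]|linear] := boolP (has (fun z => count_mem z s == 1) s); last first.
  exfalso; suff : n.+1 < size (undup s) by rewrite ltnNge Hs.
  apply: nonlinear_cover_bound ne Eq _ => z zs.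
  by apply: contra linear => C1; apply/hasP; exists z.
have [A [B [Es nA nB]]] := split_single Cx; subst s.
have [A' [B' [-> EA EB]]] := isom_eq_split nA nB E.
move: Eq; rewrite !(subst_cat, subst_cons) => Eq.
have rA : rigid (subst_word sigma A).
  apply: (@rigid_strict_factor n [::] _ (sigma x ++ subst_word sigma B)) => //.
  by case: (sigma x) (ne x).
have rB : rigid (subst_word sigma B).
  apply: (@rigid_strict_factor n (subst_word sigma A ++ sigma x) _ [::]).
    by rewrite cats0 -catA.
  by rewrite orbF; case: (subst_word sigma A) => //; case: (sigma x) (ne x).
by rewrite (rA _ (isom_eq_subst sigma EA)) (rB _ (isom_eq_subst sigma EB)).
Qed.

Lemma identity_holds_in_S n s t :
  s != [::] -> t != [::] -> satisfies Dinf_mul s t -> size (undup s) <= n.+1 ->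
  satisfies (mulS n.+1) s t.
Proof.
move=> ns nt /(satisfies_isom_eq ns nt) E Hs.
have St : s =i t := isom_eq_mem E.
have Ht : size (undup t) <= n.+1 by rewrite -(perm_size (perm_undup St)).
have [long|short] := ltnP 1 (size s); last first.
  case: s ns short E {St Hs} => [|x [|]] // _ _ E.
  by rewrite (@rigid_split [::] x [::] rigid_nil rigid_nil _ _ _ E).
move=> phi; rewrite !eval_mulS -?(isom_eq_size E) // (eq_all_r St); congr Some.
case: (all _ t) => //; rewrite /fac; have word_ne := word_of_nonempty phi.
case I1: (infix (subst_word (word_of phi) s) _).
  by rewrite (factor_identity E Hs word_ne I1) I1.
case I2: (infix (subst_word (word_of phi) t) _) => //.
by rewrite (factor_identity (isom_eq_sym E) Ht word_ne I2) I2 in I1.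
Qed.

Lemma ival_pal_translation psi l : (ival psi (pal l)).2 = false.
Proof.
elim: l => [|x l IH] //; rewrite pal_cons ival_cons ival_cat /= IH.
by case: (psi x).2.
Qed.

(* Dinf satisfies U_n = 0 0 C_n, as C_n and 0 0 are both translations ... *)
Lemma satisfies_witness n : satisfies Dinf_mul (Uw n) ([:: 0; 0] ++ Cw n).
Proof.
apply/satisfies_isom_eq => [|//|psi]; first by rewrite /Uw; case: (Cw n).
rewrite /Uw (@ival_cat psi (Cw n)) (@ival_cat psi [:: 0; 0]).
apply: imul_translationsC; first exact: ival_pal_translation.
by rewrite /= /imul /=; case: (psi 0).2.
Qed.

(* ... but S_(n+1) does not: evaluate every letter at itself. *)
Lemma S_violates_witness n : ~ satisfies (mulS n.+1) (Uw n.+1) ([:: 0; 0] ++ Cw n.+1).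
Proof.
set phi := fun x : nat => Some [:: x].
have all_good w : all (good phi) w by apply/allP.
have subst_id w : subst_word (word_of phi) w = w by apply: flatten_seq1.
move=> /(_ phi); rewrite !eval_mulS ?size_Uw // !all_good !subst_id.
by rewrite {1}/fac infix_refl /fac; case: ifP => // _ [] /(congr1 (head 0)).
Qed.

(* Part (3): a finite basis with at most K variables in left-hand sides would
   hold in S_(K+1) together with all its consequences. *)
Lemma Dinf_no_finite_basis : ~ has_finite_basis Dinf_mul.
Proof.
move=> [Sigma [sound_Sigma complete_Sigma]].
set K := \max_(e <- Sigma) size (undup e.1).
have Sigma_in_S : forall e, e \in Sigma -> satisfies (mulS K.+1) e.1 e.2.
  move=> e eS; have [ne1 ne2 sat] := sound_Sigma e eS.
  apply: identity_holds_in_S ne1 ne2 sat _.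
  apply: leq_trans (leqnSn K).
  exact: (@leq_bigmax_seq _ Sigma xpredT (fun e => size (undup e.1))).
apply: (@S_violates_witness K); apply: (derives_sound (@mulSA K.+1) Sigma_in_S).
by apply: complete_Sigma (satisfies_witness K.+1); rewrite /Uw; case: (Cw _).
Qed.

Theorem mainTheorem5 :
  [/\ in_Com_malcev_Fin Dinf_mul,
      (forall n : nat, 1 <= n -> isoterm Dinf_mul (zimin n)) &
      ~ has_finite_basis Dinf_mul].
Proof.
split; [exact: Dinf_in_Com_malcev_Fin | exact: zimin_isoterm | exact: Dinf_no_finite_basis].
Qed.
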